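(* Let $1\le m<n$, let $\mathbf{b}\in\{0,1\}^{n-m}$ with $\mathbf{b}\neq\mathbf{0}_{n-m}$, and let $y\in\mathbb{Q}[t]$. The map \[\mathrm{Tot}(\mathcal{L}^{\mathbb{Q}}_{T^m}(\mathbb{Q}[t];\mathbb{Q}))\to\mathrm{Tot}(\mathcal{L}^{\mathbb{Q}}_{T^n}(\mathbb{Q}[t];\mathbb{Q})),\qquad c\mapsto c_{(-,\mathbf{0})}\otimes y_{(\mathbf{0},\mathbf{b})}\] is a chain map.
   Context: The $n$-chain complex $C^{(n)}=\mathcal{L}^{\mathbb{Q}}_{T^n}(\mathbb{Q}[t];\mathbb{Q})$: in multi-degree $\mathbf{V}=(v_1,\dots,v_n)\in\mathbb{N}^n$, elements are sums of multi-matrices of size $(v_1+1)\times\cdots\times(v_n+1)$ with entries in $\mathbb{Q}[t]$ at coordinates $\mathbf{v}\ne\mathbf{0}_n$ ($\mathbf{0}\le\mathbf{v}\le\mathbf{V}$) and an entry in $\mathbb{Q}$ at $\mathbf{0}_n$ (tensor products over $\mathbb{Q}$; $\mathbb{Q}$ is a $\mathbb{Q}[t]$-module via $t\mapsto0$). In direction $i$ the slices are indexed by $j\in\{0,\dots,v_i\}$; $d_{i,j}$ ($j<v_i$) multiplies slices $j$ and $j+1$ entrywise into one slice and $d_{i,v_i}$ multiplies slice $v_i$ into slice $0$. With $\mathrm{d}_i=\sum_j(-1)^jd_{i,j}$, the total complex has differential $\mathrm{d}=\sum_i(-1)^{v_1+\cdots+v_{i-1}}\mathrm{d}_i$. $\mathbf{0}_k,\mathbf{1}_k$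 are constant vectors of length $k$. For a multi-matrix $c$ in multi-degree $\mathbf{W}\in\mathbb{N}^m$ with entries $c_{\mathbf{a}}$, $c_{(-,\mathbf{0})}\otimes y_{(\mathbf{0},\mathbf{b})}$ is the multi-matrix in multi-degree $(\mathbf{W},\mathbf{1}_{n-m})$ with $c_{\mathbf{a}}$ at coordinate $(\mathbf{a},\mathbf{0}_{n-m})$, $y$ at coordinate $(\mathbf{0}_m,\mathbf{b})$, and $1$ elsewhere; the map is extended linearly. *)

From HB Require Import structures.
From mathcomp Require Import all_boot all_order all_algebra.
From mathcomp Require Import mpoly.
Set Implicit Arguments. Unset Strict Implicit. Unset Printing Implicit Defensive.
Import Order.TTheory GRing.Theory Num.Theory.
Local Open Scope ring_scope.

Definition deg (n : nat) := {ffun 'I_n -> nat}.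

(* Coordinates v with 0 <= v <= V of the multi-matrix of multi-degree V. *)
Definition Coord n (V : deg n) := {dffun forall i : 'I_n, 'I_(V i).+1}.
Definition czero n (V : deg n) : Coord V := [ffun i => ord0].
(* Nonzero coordinates: those carrying a Q[t]-entry. *)
Definition NZ n (V : deg n) := {x : Coord V | x != czero V}.
Definition nv n (V : deg n) := #|{: NZ V}|.

(* The module in multi-degree V:
   Q (x) Q[t]^{(x) (nonzero coordinates)}  ~=  Q[t_v : v nonzero coordinate],
   an elementary tensor  x_0 (x) (x)_v x_v  being  x_0 * prod_v x_v(t_v). *)
Definition C n (V : deg n) := {mpoly rat[nv V]}.

(* The variable t_v at a coordinate v; at the zero coordinate (the Q-entry,
   where t acts by 0) the "variable" is 0. *)
Definition Xc n (V : deg n) (x : Coord V) : C V :=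
  match (insub x : option (NZ V)) with
  | Some x' => 'X_(enum_rank x')
  | None => 0
  end.

(* The algebra map induced by a map of coordinates (multiplying entries
   sent to the same coordinate). *)
Definition cmap n (V : deg n) n' (V' : deg n') (phi : Coord V -> Coord V')
  (p : C V) : C V' :=
  comp_mpoly [tuple Xc (phi (val (enum_val l))) | l < nv V] p.

Definition up n (i : 'I_n) (U : deg n) : deg n := [ffun l => U l + (l == i)].

(* In direction i, from slice index range 0..v (v = U i + 1) to 0..v-1:
   j < v : merge slices j and j+1 ;  j = v : merge slice v into slice 0. *)
Definition faceidx (v j c : nat) : nat :=
  if (j < v)%N then (if (c <= j)%N then c else c.-1) else (if c == v then 0%N else c).

Definition phi n (i : 'I_n) (j : nat) (U : deg n) (x : Coord (up i U)) : Coord U :=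
  [ffun l => inord (if l == i then faceidx (U i).+1 j (x l) else x l)].

Definition face n (i : 'I_n) (j : nat) (U : deg n) (p : C (up i U)) : C U :=
  cmap (@phi n i j U) p.

Definition dir n (i : 'I_n) (U : deg n) (p : C (up i U)) : C U :=
  \sum_(j < (U i).+2) (-1) ^+ j * @face n i j U p.

(* Families of elements, one in each multi-degree; the elements of
   Tot_k are the families supported on multi-degrees of total degree k
   (a finite set, so the direct sum is this product). *)
Definition fam n := forall V : deg n, C V.
Definition inTot n (k : nat) (x : fam n) : Prop :=
  forall V : deg n, (\sum_(i < n) V i)%N != k -> x V = 0.

Definition dtot n (x : fam n) : fam n := fun U =>
  \sum_(i < n) (-1) ^+ (\sum_(l < n | (l < i)%N) U l) * @dir n i U (x (up i U)).

Definition restr m n (U : deg n) : deg m :=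
  [ffun i : 'I_m => if (insub (val i) : option 'I_n) is Some j then U j else 0%N].

Definition emb m n (U : deg n) (a : Coord (restr m U)) : Coord U :=
  [ffun k => inord (if (insub (val k) : option 'I_m) is Some i then val (a i) else 0%N)].

Definition bcoord m n (b : (n - m).-tuple bool) (U : deg n) : Coord U :=
  [ffun k => inord (if (m <= val k)%N then nat_of_bool (nth false b (val k - m)) else 0%N)].

Definition Fmap m n (b : (n - m).-tuple bool) (y : {poly rat}) (x : fam m) : fam n :=
  fun U =>
    if [forall k : 'I_n, (m <= val k)%N ==> (U k == 1%N)] then
      cmap (@emb m n U) (x (restr m U)) *
        (map_poly (@mpolyC _ rat) y).[Xc (bcoord b U)]
    else 0.

From HB Require Import structures.
From mathcomp Require Import all_boot all_order all_algebra.
From mathcomp Require Import mpoly zify.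
From Stdlib Require Import FunctionalExtensionality.
Set Implicit Arguments. Unset Strict Implicit. Unset Printing Implicit Defensive.
Import Order.TTheory GRing.Theory Num.Theory.
Local Open Scope ring_scope.

(* The image of c is concentrated in the multi-degrees U with U_k = 1 for
   every new direction k >= m.  Out of such a degree the new differential d_k is
   d_{k,0} - d_{k,1}, and both faces merge slices 0 and 1, so d_k vanishes on
   the image.  In an old direction i < m the faces only touch the first m
   coordinates: they commute with padding coordinates by zeros, and they fix the
   coordinate (0, b) carrying y, whose i-th entry is 0.  The signs agree because
   they only involve the old degrees. *)

HB.instance Definition _ n (V : deg n) n' (V' : deg n') (f : Coord V -> Coord V') :=
  GRing.LRMorphism.copy (cmap f) (comp_mpoly [tuple Xc (f (val (enum_val l))) | l < nv V]).

Lemma cmap_Xc n (V : deg n) n' (V' : deg n') (f : Coord V -> Coord V') w :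
  f (czero V) = czero V' -> cmap f (Xc w) = Xc (f w).
Proof.
move=> f0; rewrite /Xc; case: insubP => [w' _ <-|].
  by rewrite /cmap comp_mpolyXU -tnth_nth tnth_mktuple enum_rankK /Xc.
by rewrite negbK => /eqP ->; rewrite raddf0 f0 insubF ?eqxx.
Qed.

Lemma eq_cmap n (V : deg n) n' (V' : deg n') (f g : Coord V -> Coord V') :
  f =1 g -> cmap f =1 cmap g.
Proof. by move=> fg p; rewrite /cmap; congr comp_mpoly; apply: eq_mktuple => l; rewrite fg. Qed.

Lemma cmap_comp n (V : deg n) n' (V' : deg n') n'' (V'' : deg n'')
  (f : Coord V' -> Coord V'') (g : Coord V -> Coord V') p :
  f (czero V') = czero V'' -> cmap f (cmap g p) = cmap (f \o g) p.
Proof.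
move=> f0; elim/mpolyind: p => [|c mm p _ _ IH]; first by rewrite !raddf0.
rewrite !raddfD /= !linearZ IH; congr (_ *: _ + _).
rewrite /= {2 3}/cmap !comp_mpolyX rmorph_prod; apply: eq_bigr => i _.
by rewrite !tnth_mktuple rmorphXn; congr (_ ^+ _); apply: cmap_Xc.
Qed.

Lemma cmap_horner n (V : deg n) n' (V' : deg n') (f : Coord V -> Coord V')
    (y : {poly rat}) w :
  f (czero V) = czero V' ->
  cmap f (map_poly (@mpolyC _ rat) y).[Xc w] = (map_poly (@mpolyC _ rat) y).[Xc (f w)].
Proof.
move=> f0; rewrite -horner_map -map_poly_comp /= -[X in _.[X]]/(cmap f _) cmap_Xc //.
by congr (_.[_]); apply: eq_map_poly => c /=; rewrite /cmap comp_mpolyC.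
Qed.

Lemma val_inord N e : val (@inord N e) = if (e <= N)%N then e else 0%N.
Proof. by rewrite /inord val_insubd ltnS. Qed.

Lemma upE n (i : 'I_n) (U : deg n) l : up i U l = (U l + (l == i))%N.
Proof. by rewrite ffunE. Qed.

Lemma val_phi n (i : 'I_n) j (U : deg n) (x : Coord (up i U)) l :
  val (phi j x l) =
  val (@inord (U l) (if l == i then faceidx (U i).+1 j (x l) else x l)).
Proof. by rewrite ffunE. Qed.

Lemma faceidx_le v j c : (c <= v.+1)%N -> (faceidx v.+1 j c <= v)%N.
Proof. by rewrite /faceidx; case: ifP => hj; case: ifP => hc; move: hj hc; try move/eqP; lia. Qed.

Lemma faceidx0 v j : faceidx v j 0 = 0%N.
Proof. by rewrite /faceidx; case: ifP; rewrite ?if_same. Qed.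

Lemma val_czero n (V : deg n) l : val (czero V l) = 0%N.
Proof. by rewrite ffunE. Qed.

Lemma phi_czero n (i : 'I_n) j (U : deg n) : phi j (czero (up i U)) = czero U.
Proof.
apply/ffunP => l; apply/val_inj.
by rewrite val_phi !val_czero faceidx0 !if_same val_inord.
Qed.

Lemma phi0_phi1 n (i : 'I_n) (U : deg n) : U i = 0%N -> @phi n i 0 U =1 @phi n i 1 U.
Proof.
move=> Ui0 x; apply/ffunP => l; apply/val_inj; rewrite !val_phi; case: eqP => [->|//].
have := ltn_ord (x i); move: (nat_of_ord (x i)) => c.
by rewrite upE eqxx Ui0 /faceidx; case: c => [|[|]].
Qed.

Lemma dir_deg1_eq0 n (i : 'I_n) (U : deg n) p :
  U i = 0%N -> dir (i := i) (U := U) p = 0.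
Proof.
move=> Ui0; rewrite /dir Ui0 !big_ord_recl big_ord0 /face (eq_cmap (phi0_phi1 Ui0)).
by rewrite expr0 expr1 mul1r mulN1r addr0 subrr.
Qed.

(* [emb] is [pad] at W = restr m U; freeing the source degree W lets
   restr m (up i U) be rewritten to up i (restr m U) below. *)
Definition pad m n (W : deg m) (U : deg n) (a : Coord W) : Coord U :=
  [ffun k => inord (if (insub (val k) : option 'I_m) is Some i then val (a i) else 0%N)].

Section Padding.
Variables (m n : nat) (le_mn : (m <= n)%N).
Local Notation old := (widen_ord le_mn).

Lemma restrE (U : deg n) (i : 'I_m) : restr m U i = U (old i).
Proof.
rewrite ffunE; case: insubP => [i' _ e|]; first by congr (U _); apply/val_inj.
by rewrite /= (leq_trans (ltn_ord i) le_mn).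
Qed.

Lemma restr_up (U : deg n) (i : 'I_m) : restr m (up (old i) U) = up i (restr m U).
Proof. by apply/ffunP => l; rewrite restrE !upE restrE. Qed.

Lemma new_neq_old (k : 'I_n) (i : 'I_m) : (m <= k)%N -> k != old i.
Proof. by move=> mk; rewrite -val_eqE neq_ltn /= (leq_trans (ltn_ord i) mk) orbT. Qed.

Lemma val_pad_old (W : deg m) (U : deg n) (a : Coord W) (k : 'I_m) :
  val (pad U a (old k)) = val (@inord (U (old k)) (a k)).
Proof. by rewrite ffunE /= valK. Qed.

Lemma val_pad_new (W : deg m) (U : deg n) (a : Coord W) (k : 'I_n) :
  (m <= k)%N -> val (pad U a k) = 0%N.
Proof. by move=> mk; rewrite ffunE insubF ?val_inord //= ltnNge mk. Qed.

Lemma pad_czero (W : deg m) (U : deg n) : pad U (czero W) = czero U.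
Proof.
apply/ffunP => k; apply/val_inj; rewrite val_czero ffunE val_inord.
by case: insub => [k'|]; rewrite ?val_czero.
Qed.

Lemma phi_pad (U : deg n) (i : 'I_m) j (a : Coord (up i (restr m U))) :
  phi j (pad (up (old i) U) a) = pad U (phi j a).
Proof.
apply/ffunP => k; apply/val_inj; have [km|mk] := ltnP k m; last first.
  by rewrite val_phi (negbTE (new_neq_old i mk)) !val_inord !val_pad_new.
have -> : k = old (Ordinal km) by apply/val_inj.
move: (Ordinal km) => {k km} k.
rewrite val_pad_old !val_inord val_phi val_pad_old !val_phi !val_inord.
have := ltn_ord (a k); move: (nat_of_ord _) => c; rewrite !upE !restrE.
have [->|nki] := eqVneq k i.
  by rewrite !eqxx addn1 ltnS => hc; rewrite hc !(faceidx_le _ hc).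
have nki' : old k != old i by rewrite -val_eqE /= val_eqE.
by rewrite (negbTE nki') addn0 ltnS => hc; rewrite hc.
Qed.

Lemma val_bcoord (b : (n - m).-tuple bool) (U : deg n) l :
  val (bcoord b U l) =
  val (@inord (U l) (if (m <= l)%N then nat_of_bool (nth false b (l - m)) else 0%N)).
Proof. by rewrite ffunE. Qed.

Lemma phi_bcoord (b : (n - m).-tuple bool) (U : deg n) (i : 'I_m) j :
  phi j (bcoord b (up (old i) U)) = bcoord b U.
Proof.
apply/ffunP => l; apply/val_inj; rewrite val_phi !val_bcoord upE.
have [->|nli] := eqVneq l (old i); last by rewrite addn0 inord_val.
have -> : (m <= old i)%N = false by rewrite leqNgt /= ltn_ord.
by rewrite !val_inord faceidx0.
Qed.

End Padding.

Lemma dir0 n (i : 'I_n) (U : deg n) : dir (i := i) (U := U) 0 = 0.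
Proof. by rewrite /dir big1 // => j _; rewrite /face raddf0 mulr0. Qed.

Definition ones_beyond m n (U : deg n) : bool :=
  [forall k : 'I_n, (m <= k)%N ==> (U k == 1%N)].

Lemma FmapE m n (b : (n - m).-tuple bool) (y : {poly rat}) (x : fam m) (U : deg n) :
  Fmap b y x U = if ones_beyond m U then
    cmap (@pad m n _ U) (x (restr m U)) * (map_poly (@mpolyC _ rat) y).[Xc (bcoord b U)]
  else 0.
Proof. by []. Qed.

Section ChainMap.
Variables (m n : nat) (le_mn : (m <= n)%N).
Variables (b : (n - m).-tuple bool) (y : {poly rat}) (x : fam m).
Local Notation old := (widen_ord le_mn).
Local Notation y_at w := ((map_poly (@mpolyC _ rat) y).[Xc w]).

Lemma ones_beyond_up (U : deg n) (i : 'I_m) :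
  ones_beyond m (up (old i) U) = ones_beyond m U.
Proof.
apply: eq_forallb => k; case: (leqP m k) => //= mk.
by rewrite upE (negbTE (new_neq_old le_mn i mk)) addn0.
Qed.

Lemma dir_Fmap_new (i : 'I_n) (U : deg n) : (m <= i)%N -> dir (Fmap b y x (up i U)) = 0.
Proof.
move=> mi; have [Ui0|Ui] := eqVneq (U i) 0%N; first exact: dir_deg1_eq0.
rewrite FmapE; case: ifP => [/forallP/(_ i)|_]; last exact: dir0.
by rewrite mi upE eqxx addn1 eqSS (negbTE Ui).
Qed.

Lemma dir_Fmap_old (i : 'I_m) (U : deg n) : ones_beyond m U ->
  dir (Fmap b y x (up (old i) U)) =
  cmap (@pad m n _ U) (dir (x (up i (restr m U)))) * y_at (bcoord b U).
Proof.
move=> hU; rewrite FmapE ones_beyond_up hU (restr_up le_mn U i).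
rewrite /dir [in RHS]raddf_sum [in RHS]mulr_suml -(restrE le_mn U i).
apply: eq_bigr => j _ /=.
rewrite rmorphM rmorph_sign /= -mulrA; congr (_ * _).
rewrite /face rmorphM /= cmap_horner ?phi_czero // phi_bcoord; congr (_ * _).
rewrite !cmap_comp ?phi_czero ?pad_czero //; apply: eq_cmap => a /=.
exact: phi_pad.
Qed.

Lemma sum_lt_restr (U : deg n) (i : 'I_m) :
  (\sum_(l < n | (l < old i)%N) U l)%N = (\sum_(l < m | (l < i)%N) restr m U l)%N.
Proof.
rewrite (eq_bigl (fun l : 'I_n => (l < old i) && (l < m))%N); last first.
  by move=> l /=; apply/esym/andb_idr => li; exact: ltn_trans li (ltn_ord i).
by rewrite (big_ord_narrow_cond le_mn); apply: eq_bigr => l _; rewrite restrE.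
Qed.

Lemma Fmap_dtot (U : deg n) : Fmap b y (dtot x) U = dtot (Fmap b y x) U.
Proof.
rewrite [LHS]FmapE /dtot (bigID (fun i : 'I_n => (i < m)%N)) /=.
rewrite [X in _ = _ + X]big1 ?addr0 => [|i]; last first.
  by rewrite -leqNgt => mi; rewrite dir_Fmap_new ?mulr0.
rewrite (big_ord_narrow le_mn); case: ifP => hU; last first.
  by rewrite big1 // => i _; rewrite FmapE ones_beyond_up hU dir0 mulr0.
rewrite raddf_sum mulr_suml; apply: eq_bigr => i _.
by rewrite dir_Fmap_old // sum_lt_restr /= (rmorphM (cmap (pad U))) rmorph_sign mulrA.
Qed.

Lemma inTot_Fmap k : inTot k x -> inTot (k + (n - m)) (Fmap b y x).
Proof.
move=> hx U; rewrite FmapE; case: ifP => [/forallP hU|//] hUk.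
rewrite hx ?raddf0 ?mul0r //; apply: contra hUk => /eqP <-.
rewrite (bigID (fun i : 'I_n => (i < m)%N)) /= (big_ord_narrow le_mn).
apply/eqP; congr (_ + _)%N; first by apply: eq_bigr => i _; rewrite restrE.
rewrite (eq_big (fun i : 'I_n => xpredT i && (m <= i)%N) (fun=> 1%N)) => [|i|i].
- by rewrite -(big_geq_mkord m n xpredT (fun=> 1%N)) sum_nat_const_nat muln1.
- by rewrite -leqNgt.
- by rewrite -leqNgt => mi; apply/eqP/(implyP (hU i)).
Qed.

End ChainMap.

Theorem lemma4p7 (m n : nat) (hm : (1 <= m)%N) (hmn : (m < n)%N)
  (b : (n - m).-tuple bool) (hb : (b : seq bool) != nseq (n - m) false)
  (y : {poly rat}) (k : nat) (x : fam m) (hx : inTot k x) :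
  inTot (k + (n - m)) (Fmap b y x) /\
  Fmap b y (dtot x) = dtot (Fmap b y x).
Proof.
split; first exact: (inTot_Fmap (ltnW hmn)).
exact: functional_extensionality_dep (Fmap_dtot (ltnW hmn) b y x).
Qed.
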